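(* Let $X$ be a Hausdorff topological space and $f\colon X\to\mathbb R^n$ a continuous proper map. Suppose $S\subseteq X$ is a dense subset saturated by $f$ (i.e. a union of level sets of $f$) such that $f(S)$ is convex, the fibres of $f|_S$ are connected, and $f|_S\colon S\to f(S)$ is open. Then the fibres of $f$ are connected. *)

From HB Require Import structures.
From mathcomp Require Import all_boot all_order all_algebra.
From mathcomp Require Import all_classical all_reals all_analysis.
Set Implicit Arguments. Unset Strict Implicit. Unset Printing Implicit Defensive.
Import Order.TTheory GRing.Theory Num.Theory.
Import numFieldNormedType.Exports.
Local Open Scope classical_set_scope.
Local Open Scope ring_scope.

Definition proper_map (X Y : topologicalType) (f : X -> Y) : Prop :=
  forall K : set Y, compact K -> compact (f @^-1` K).

Definition saturated (X Y : Type) (f : X -> Y) (S : set X) : Prop :=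
  forall x x', S x -> f x = f x' -> S x'.

(* The restriction f|_S : S -> f(S) is open, for the subspace topologies:
   open sets of S are U `&` S with U open in X, open sets of f(S) are
   V `&` f(S) with V open in Y. *)
Definition open_restriction (X Y : topologicalType) (f : X -> Y) (S : set X) : Prop :=
  forall U : set X, open U ->
    exists2 V : set Y, open V & f @` (U `&` S) = V `&` f @` S.

From HB Require Import structures.
From mathcomp Require Import all_boot all_order all_algebra.
From mathcomp Require Import all_classical all_reals all_analysis.
Import Order.TTheory GRing.Theory Num.Theory.
Import numFieldNormedType.Exports.
Local Open Scope classical_set_scope.
Local Open Scope ring_scope.

Set Implicit Arguments.
Unset Strict Implicit.
Unset Printing Implicit Defensive.

(* If the compact fibre F = f^-1(y) were disconnected, it would be covered
   by two disjoint open sets U0, U1 both meeting it.  By properness, the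
   preimage of some ball B around y already lies in U0 `|` U1.  The convex,
   hence connected, set f(S) `&` B has a connected preimage in S, because f
   restricted to S is open with connected fibres; by density of S this
   preimage meets both U0 and U1, a contradiction. *)

Section connected_open_cover.
Context {T : topologicalType}.
Implicit Types A U V : set T.

Lemma open_separated A U V : open U -> open V -> A `&` U `&` V = set0 ->
  separated (A `&` U) (A `&` V).
Proof.
move=> oU oV AUV; split; apply/disjoints_subset.
- move=> x clx [Ax Vx].
  have [z [[Az Uz] Vz]] := clx V (@open_nbhs_nbhs _ x V (conj oV Vx)).
  by have : (A `&` U `&` V) z by []; rewrite AUV.
- move=> x [Ax Ux] clx.
  have [z [[Az Vz] Uz]] := clx U (@open_nbhs_nbhs _ x U (conj oU Ux)).
  by have : (A `&` U `&` V) z by []; rewrite AUV.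
Qed.

Lemma connected_open_coverP A : connected A <->
  forall U V, open U -> open V -> A `<=` U `|` V -> A `&` U `&` V = set0 ->
    A `<=` U \/ A `<=` V.
Proof.
split=> [cA U V oU oV AUV AUV0|coverA].
  have AE : A `<=` (A `&` U) `|` (A `&` V).
    by move=> x Ax; case: (AUV x Ax) => ?; [left|right].
  by case: (connected_subset (open_separated oU oV AUV0) AE cA) => sA;
    [left|right] => x /sA[].
apply/connectedP => E [E0 AE [sE1 sE2]].
have oC b : open (~` closure (E b)) by exact/closed_openC/closed_closure.
have E1 : E false `<=` ~` closure (E true) by apply/disjoints_subset.
have E2 : E true `<=` ~` closure (E false).
  by apply/disjoints_subset; rewrite setIC.
have cover : A `<=` ~` closure (E true) `|` ~` closure (E false).
  by rewrite AE => x [/E1|/E2]; [left|right].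
have disj : A `&` ~` closure (E true) `&` ~` closure (E false) = set0.
  rewrite AE; apply/seteqP; split => // x [[[Ex|Ex] nE1] nE0].
    exact/nE0/subset_closure.
  exact/nE1/subset_closure.
have [AE1|AE2] := coverA _ _ (oC true) (oC false) cover disj.
- have [x Ex] := E0 true; apply: (AE1 x); first by rewrite AE; right.
  exact: subset_closure.
- have [x Ex] := E0 false; apply: (AE2 x); first by rewrite AE; left.
  exact: subset_closure.
Qed.

Lemma connected_subset_open_cover A B U V : connected B -> B `<=` A ->
  open U -> open V -> A `<=` U `|` V -> A `&` U `&` V = set0 ->
  B `<=` U \/ B `<=` V.
Proof.
move=> cB BA oU oV AUV AUV0; apply: (connected_open_coverP B).1 => //.
  exact: subset_trans AUV.
by apply/seteqP; split => // x [[/BA Ax Ux] Vx]; rewrite -AUV0.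
Qed.

End connected_open_cover.

Section compact_separation.
Context {T : topologicalType}.
Implicit Types A B : set T.

Lemma compact_filter_closure_disjoint A (F : set_system T) :
  ProperFilter F -> compact A ->
  (forall a, A a -> exists2 U, open_nbhs a U & exists2 V, F V & U `&` V = set0) ->
  exists2 V, F V & A `&` closure V = set0.
Proof.
move=> PF cA sepA.
have cover a : A a -> \forall x \near a & W \near powerset_filter_from F,
    ~ closure W x.
  move=> Aa; have [U [oU Ua] [V FV UV]] := sepA a Aa.
  exists (U, [set W | F W /\ W `<=` V]).
    by split; [exact: open_nbhs_nbhs | exact: powerset_filter_fromP].
  case=> x W /= [Ux [_ WV]] clWx.
  have [z [Wz Uz]] := clWx U (open_nbhs_nbhs (conj oU Ux)).
  have : (U `&` V) z by split => //; exact: WV.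
  by rewrite UV.
have anti B C : B `<=` C -> A `<=` ~` closure C -> A `<=` ~` closure B.
  by move=> BC AC x Ax clBx; exact/(AC x Ax)/(closureS BC).
have [V FV AV] := (near_powerset_filter_fromP F anti).1
  ((compact_near_coveringP A).1 cA _ _ _ _ cover).
by exists V => //; apply/disjoints_subset.
Qed.

Lemma compact_separation A B : hausdorff_space T -> compact A -> compact B ->
  A `&` B = set0 ->
  exists U V, [/\ open U, open V, A `<=` U, B `<=` V & U `&` V = set0].
Proof.
move=> hT cA cB AB.
have [->|A0] := eqVneq A set0.
  by exists set0, setT; split => //; [exact: open0 | exact: openT | exact: set0I].
have nbhs_avoid_A b : B b -> exists2 W, nbhs b W & A `&` closure W = set0.
  move=> Bb; apply: compact_filter_closure_disjoint => // a Aa.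
  have ab : a != b.
    apply/eqP => ab; have : (A `&` B) a by split => //; rewrite ab.
    by rewrite AB.
  move: hT; rewrite open_hausdorff => /(_ a b ab) [[P Q] /= []].
  rewrite !inE => Pa Qb [oP oQ /eqP PQ].
  exists P; first by split.
  exists Q; last exact/eqP.
  exact: (@open_nbhs_nbhs T b Q (conj oQ Qb)).
have [W nAW BW] : exists2 W, set_nbhs A W & B `&` closure W = set0.
  apply: compact_filter_closure_disjoint => //.
    exact/set_nbhs_pfilter/set0P.
  move=> b Bb; have [W nbW AW] := nbhs_avoid_A b Bb.
  exists (interior W); first by split => //; exact: open_interior.
  exists (~` closure W).
    apply/set_nbhsP; exists (~` closure W); split => //.
      exact/closed_openC/closed_closure.
    exact/disjoints_subset.
  apply/disjoints_subset => x /interior_subset Wx; rewrite setCK.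
  exact: subset_closure.
have [C [oC AC CW]] := (set_nbhsP _ _).1 nAW.
exists C, (~` closure W); split => //.
- exact/closed_openC/closed_closure.
- exact/disjoints_subset.
- by apply/disjoints_subset => x /CW Wx; rewrite setCK; exact: subset_closure.
Qed.

Lemma separated_closedUl A B : separated A B -> closed (A `|` B) -> closed A.
Proof.
move=> [clAB _] cAB x clAx.
have /cAB [//|Bx] : closure (A `|` B) x by exact: closureS clAx.
by have : (closure A `&` B) x by []; rewrite clAB.
Qed.

Lemma compact_disconnected_open_cover A : hausdorff_space T -> compact A ->
  ~ connected A ->
  exists U : bool -> set T, [/\ forall b, open (U b), forall b, A `&` U b !=set0,
    A `<=` U false `|` U true & U false `&` U true = set0].
Proof.
move=> hT cA /connectedPn[E [E0 AE sE]].
have clA : closed A := compact_closed hT cA.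
have clE b : closed (E b).
  case: b; last by apply: separated_closedUl sE _; rewrite -AE.
  by apply: (@separated_closedUl _ (E false)); rewrite 1?separatedC // setUC -AE.
have kE b : compact (E b).
  apply: subclosed_compact (clE b) cA _.
  by rewrite AE; case: b => ? ?; [right|left].
have [U0 [U1 [oU0 oU1 EU0 EU1 U01]]] :=
  compact_separation hT (kE false) (kE true) (separated_disjoint sE).
exists (fun b => if b then U1 else U0); split => //.
- by case.
- case=> /=; [have [x Ex] := E0 true | have [x Ex] := E0 false]; exists x;
    (split; [rewrite AE | ]); by [right | left | exact: EU1 | exact: EU0].
- by rewrite AE => x [/EU0|/EU1]; [left|right].
Qed.

End compact_separation.

Lemma proper_preimage_nbhs (X Y : topologicalType) (f : X -> Y) (y : Y)
    (K : set Y) (W : set X) :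
  hausdorff_space Y -> continuous f -> proper_map f -> compact K -> nbhs y K ->
  open W -> f @^-1` [set y] `<=` W ->
  exists2 N, nbhs y N & f @^-1` N `<=` W.
Proof.
move=> hY cf pf cK yK oW yW.
pose T := f @^-1` K `&` ~` W.
have cT : compact T by apply: compact_closedI; [exact: pf | exact: open_closedC].
have clfT : closed (f @` T).
  apply: compact_closed hY _.
  exact: continuous_compact (continuous_subspaceT cf) cT.
have nyT : ~ (f @` T) y by case=> x [_ nWx] fxy; exact/nWx/yW.
exists (K `&` ~` f @` T).
  apply: filterI => //; apply: open_nbhs_nbhs.
  by split => //; exact: closed_openC.
move=> x [Kfx nTfx]; apply: contrapT => nWx.
by apply: nTfx; exists x.
Qed.

Lemma open_restriction_connected_preimage (X Y : topologicalType) (f : X -> Y)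
    (S : set X) (C : set Y) :
  open_restriction f S -> (forall y, connected (S `&` f @^-1` [set y])) ->
  connected C -> C `<=` f @` S -> connected (S `&` f @^-1` C).
Proof.
move=> oS cS cC CfS; apply/connected_open_coverP => U0 U1 oU0 oU1 AU AU01.
set A := S `&` f @^-1` C.
have notU01 x : A x -> U0 x -> U1 x -> False.
  by move=> Ax U0x U1x; have : (A `&` U0 `&` U1) x by []; rewrite AU01.
have fibre_in_A z : C z -> S `&` f @^-1` [set z] `<=` A.
  by move=> Cz x [Sx fxz]; split => //; rewrite /preimage /= fxz.
have side z : C z ->
    S `&` f @^-1` [set z] `<=` U0 \/ S `&` f @^-1` [set z] `<=` U1.
  by move=> Cz; apply: connected_subset_open_cover (fibre_in_A z Cz) _ _ AU AU01.
(* The images V0, V1 of the two sides split C, since every fibre lies on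
   one side. *)
have [V0 oV0 eV0] := oS U0 oU0.
have [V1 oV1 eV1] := oS U1 oU1.
have memV U V z : f @` (U `&` S) = V `&` f @` S -> C z ->
    V z <-> exists2 x, (S `&` f @^-1` [set z]) x & U x.
  move=> eV Cz; split=> [Vz|[x [Sx fxz] Ux]].
    have : (V `&` f @` S) z by split => //; exact: CfS.
    by rewrite -eV => -[x [Ux Sx] fxz]; exists x.
  by have [] : (V `&` f @` S) z by rewrite -eV; exists x.
have CV : C `<=` V0 `|` V1.
  move=> z Cz; have [x Sx fxz] := CfS z Cz.
  have [U0x|U1x] := AU x (fibre_in_A _ Cz _ (conj Sx fxz)).
    by left; apply/(memV _ _ _ eV0 Cz); exists x.
  by right; apply/(memV _ _ _ eV1 Cz); exists x.
have CV01 : C `&` V0 `&` V1 = set0.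
  apply/seteqP; split => // z [[Cz /(memV _ _ _ eV0 Cz) [x0 zx0 U0x0]]].
  move=> /(memV _ _ _ eV1 Cz) [x1 zx1 U1x1].
  case: (side z Cz) => [/(_ x1 zx1) U0x1|/(_ x0 zx0) U1x0].
    exact: (notU01 x1 (fibre_in_A _ Cz _ zx1) U0x1 U1x1).
  exact: (notU01 x0 (fibre_in_A _ Cz _ zx0) U0x0 U1x0).
have [CV0|CV1] :=
    connected_subset_open_cover cC (@subset_refl _ C) oV0 oV1 CV CV01;
  [left|right] => x Ax; have Cfx := Ax.2;
  have zx : (S `&` f @^-1` [set f x]) x.
- by case: Ax.
- have [x0 zx0 U0x0] := (memV _ _ _ eV0 Cfx).1 (CV0 _ Cfx).
  case: (side _ Cfx) => [/(_ x zx) //|/(_ x0 zx0) U1x0].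
  by case: (notU01 x0 (fibre_in_A _ Cfx _ zx0) U0x0 U1x0).
- by case: Ax.
- have [x1 zx1 U1x1] := (memV _ _ _ eV1 Cfx).1 (CV1 _ Cfx).
  case: (side _ Cfx) => [/(_ x1 zx1) U0x1|/(_ x zx) //].
  by case: (notU01 x1 (fibre_in_A _ Cfx _ zx1) U0x1 U1x1).
Qed.

Lemma convex_setI (R : numDomainType) (M : lmodType R)
    (A B : set (convex_lmodType M)) :
  convex_set A -> convex_set B -> convex_set (A `&` B).
Proof.
move=> cA cB x y t; rewrite !inE => -[Ax Bx] [Ay By].
by split; apply/set_mem; [apply: cA | apply: cB]; rewrite inE.
Qed.

Lemma convex_ball (R : numFieldType) (V : normedModType R) (x : V) (r : R) :
  convex_set (ball x r : set (convex_lmodType V)).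
Proof.
move=> a b t; rewrite !inE -!ball_normE /= => xa xb.
have t0 : 0 <= t%:inum by [].
have t1 : 0 <= (1 - t%:inum) by rewrite subr_ge0 le1.
have -> : x - (t%:inum *: a + (1 - t%:inum) *: b) =
          t%:inum *: (x - a) + (1 - t%:inum) *: (x - b).
  by rewrite !scalerBr addrACA -scalerDl subrKC scale1r opprD.
rewrite (le_lt_trans (ler_normD _ _)) // !normrZ !ger0_norm //.
have [->|t_gt0] := eqVneq t%:inum 0; first by rewrite mul0r add0r subr0 mul1r.
have -> : r = t%:inum * r + (1 - t%:inum) * r by rewrite -mulrDl subrKC mul1r.
rewrite ltr_leD //.
  by rewrite ltr_pM2l // lt_neqAle eq_sym t_gt0.
by rewrite ler_wpM2l // ltW.
Qed.

Lemma convex_connected (R : realType) (V : normedModType R) (A : set V) :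
  convex_set (A : set (convex_lmodType V)) -> connected A.
Proof.
move=> cA; have [->|/set0P[a Aa]] := eqVneq A set0; first exact: connected0.
pose seg b := (fun t : R => t *: a + (1 - t) *: b) @` `[0, 1]%classic.
have -> : A = \bigcup_(b in A) seg b.
  apply/seteqP; split=> [b Ab|x [b Ab [t]]].
    exists b => //; exists 0; first by rewrite /= in_itv /= lexx ler01.
    by rewrite scale0r add0r subr0 scale1r.
  rewrite /= in_itv /= => /andP[t0 t1] <-.
  by apply/set_mem/(cA a b (Itv01 t0 t1)); rewrite inE.
apply: bigcup_connected.
  exists a => b _; exists 1; first by rewrite /= in_itv /= lexx ler01.
  by rewrite scale1r subrr scale0r addr0.
move=> b _; apply: connected_continuous_connected; first exact: segment_connected.
apply: continuous_subspaceT => t.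
apply: (@continuousD _ _ _ (fun u : R => u *: a) (fun u : R => (1 - u) *: b));
  apply: continuousZr_tmp; first exact: cvg_id.
by apply: continuousB; [exact: cvg_cst | exact: cvg_id].
Qed.

Lemma rV_closed_ball_compact (R : realType) n (y : 'rV[R]_n) (r : R) :
  0 < r -> compact (closed_ball y r).
Proof.
move=> r0; apply: bounded_closed_compact; last exact: closed_ball_closed.
exists (`|y| + r); split; first exact: num_real.
move=> M yrM x; rewrite closed_ballE // => yx /=; apply: le_trans (ltW yrM).
by rewrite -[x](subKr y) (le_trans (ler_normB _ _)) // lerD2l.
Qed.

Lemma rV_proper_preimage_ball (R : realType) n (X : topologicalType)
    (f : X -> 'rV[R]_n) (y : 'rV[R]_n) (W : set X) :
  continuous f -> proper_map f -> open W -> f @^-1` [set y] `<=` W ->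
  exists2 r, 0 < r & f @^-1` ball y r `<=` W.
Proof.
move=> cf pf oW yW.
have yK : nbhs y (closed_ball y 1) by apply/nbhs_closedballP; exists 1%:pos.
have [N yN NW] := proper_preimage_nbhs (@norm_hausdorff _ _) cf pf
  (rV_closed_ball_compact (y := y) ltr01) yK oW yW.
have [r r0 rN] := (nbhs_ballP _ _).1 yN.
by exists r => // x /rN/NW.
Qed.

Theorem lemma15 (R : realType) (n : nat) (X : topologicalType)
  (f : X -> 'rV[R]_n) (S : set X) :
  hausdorff_space X ->
  continuous f ->
  proper_map f ->
  dense S ->
  saturated f S ->
  convex_set (f @` S : set (convex_lmodType 'rV[R]_n)) ->
  (forall y : 'rV[R]_n, connected (S `&` f @^-1` [set y])) ->
  open_restriction f S ->
  forall y : 'rV[R]_n, connected (f @^-1` [set y]).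
Proof.
move=> hX cf pf dS _ convS connS orS y.
have kF : compact (f @^-1` [set y]) := pf _ (@compact_set1 _ y).
apply: contrapT => /(compact_disconnected_open_cover hX kF) [U [oU FU FUU U01]].
have [r r0 rU] := rV_proper_preimage_ball cf pf (openU (oU false) (oU true)) FUU.
set C := f @` S `&` ball y r.
have cA : connected (S `&` f @^-1` C).
  apply: open_restriction_connected_preimage => //; last exact: subIsetl.
  by apply/convex_connected/convex_setI => //; exact: convex_ball.
have AU b : exists2 x, (S `&` f @^-1` C) x & U b x.
  have [x [Fx Ubx]] := FU b.
  have [s [[Ubs rs] Ss]] : (U b `&` f @^-1` ball y r) `&` S !=set0.
    apply: dS; last by apply: openI (oU b) _; exact: open_comp (ball_open _ _).
    by exists x; split => //=; rewrite Fx; exact: ballxx.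
  by exists s => //; split => //; split => //; exists s.
have cover : S `&` f @^-1` C `<=` U false `|` U true by move=> x [_ [_ /rU]].
have disj : S `&` f @^-1` C `&` U false `&` U true = set0.
  by apply/seteqP; split => // x [[_ ?] ?]; rewrite -U01.
have [AU0|AU1] :=
  (connected_open_coverP _).1 cA _ _ (oU false) (oU true) cover disj.
- have [x Ax U1x] := AU true.
  have : (U false `&` U true) x by split => //; exact: AU0.
  by rewrite U01.
- have [x Ax U0x] := AU false.
  have : (U false `&` U true) x by split => //; exact: AU1.
  by rewrite U01.
Qed.
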